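(* Let $\mathcal{H}$ be a finite-dimensional complex Hilbert space, $\mathbf{C}\subseteq\mathcal{H}$ a subspace (code space) and $P$ the orthogonal projector onto $\mathbf{C}$. Let $\mathcal{N}: B(\mathcal{H})\to B(\mathcal{H})$ be a semi-positive trace-preserving map with an operator-sum representation $\mathcal{N}(\rho)=\sum_i \operatorname{sign}(i)E_i\rho E_i^\dagger$, where $E_i\in B(\mathcal{H})$ and $\operatorname{sign}(i)=-1$ for $i$ in a nonempty subset $\mathbf{J}$ of the indices and $\operatorname{sign}(i)=1$ otherwise. If there is a Hermitian matrix $\alpha=(\alpha_{ij})$ such that $$P E_i^\dagger E_j P=\alpha_{ij}P\quad\text{for all } i,j,$$ then there exists a CPTP map $\mathcal{R}: B(\mathcal{H})\to B(\mathcal{H})$ such that $\mathcal{R}(\mathcal{N}(P\sigma P))=P\sigma P$ for every $\sigma\in B(\mathcal{H})$ (in particular $\mathcal{R}\circ\mathcal{N}(\rho)=\rho$ for every density matrix $\rho$ supported on $\mathbf{C}$).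
   Context: A density matrix is a positive semidefinite operator of trace one. A linear map $\Psi$ on $B(\mathcal{H})$ is Hermitian-preserving if $\Psi(X^\dagger)=\Psi(X)^\dagger$, trace-preserving if $\operatorname{Tr}\Psi(X)=\operatorname{Tr}X$, and semi-positive if it is Hermitian-preserving and there exists an invertible density matrix $\rho$ such that $\Psi(\rho)$ is an invertible density matrix. *)

(* H = C^n with C = R[i], the complex numbers over a real closed field R. *)
From HB Require Import structures.
From mathcomp Require Import all_boot all_order all_algebra.
From mathcomp Require Import complex.
Set Implicit Arguments. Unset Strict Implicit. Unset Printing Implicit Defensive.
Import Order.TTheory GRing.Theory Num.Theory.
Local Open Scope ring_scope.

Section Defs.
Variable C : numClosedFieldType.
Variable n : nat.

Definition adj (p q : nat) (A : 'M[C]_(p, q)) : 'M[C]_(q, p) := (map_mx Num.conj A)^T.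

Definition is_hermitian (p : nat) (A : 'M[C]_p) : Prop := adj A = A.

Definition psd (p : nat) (A : 'M[C]_p) : Prop :=
  is_hermitian A /\ forall v : 'cV[C]_p, 0 <= (adj v *m A *m v) 0 0.

Definition density (A : 'M[C]_n) : Prop := psd A /\ \tr A = 1.

Definition invertible (A : 'M[C]_n) : Prop := A \in unitmx.

Definition hermitian_preserving (Psi : 'M[C]_n -> 'M[C]_n) : Prop :=
  forall X, Psi (adj X) = adj (Psi X).

Definition trace_preserving (Psi : 'M[C]_n -> 'M[C]_n) : Prop :=
  forall X, \tr (Psi X) = \tr X.

Definition semi_positive (Psi : 'M[C]_n -> 'M[C]_n) : Prop :=
  hermitian_preserving Psi /\
  exists rho, [/\ density rho, invertible rho, density (Psi rho) & invertible (Psi rho)].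

(* complete positivity: for every k, id_k (x) Psi maps PSD block matrices
   (k x k blocks of n x n matrices) to PSD block matrices *)
Definition completely_positive (Psi : 'M[C]_n -> 'M[C]_n) : Prop :=
  forall (k : nat) (X : 'I_k -> 'I_k -> 'M[C]_n),
    psd (\mxblock_(i < k, j < k) X i j : 'M[C]_(\sum_(i < k) n)) ->
    psd (\mxblock_(i < k, j < k) Psi (X i j) : 'M[C]_(\sum_(i < k) n)).

Definition CPTP (Psi : 'M[C]_n -> 'M[C]_n) : Prop :=
  linear Psi /\ completely_positive Psi /\ trace_preserving Psi.

Definition orth_projector (P : 'M[C]_n) : Prop := P *m P = P /\ adj P = P.

Definition signed_opsum (m : nat) (E : 'I_m -> 'M[C]_n) (J : {set 'I_m})
  (rho : 'M[C]_n) : 'M[C]_n :=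
  \sum_(i < m) ((if i \in J then -1 else 1) *: (E i *m rho *m adj (E i))).

End Defs.

From mathcomp Require Import all_boot all_order all_algebra.
From mathcomp Require Import complex sesquilinear spectral ring.
Set Implicit Arguments. Unset Strict Implicit. Unset Printing Implicit Defensive.
Import Order.TTheory GRing.Theory Num.Theory.
Local Open Scope ring_scope.

(* Diagonalise the Hermitian matrix alpha = U^* D U and trade the operators
   E_j P for M_k = sum_j conj(U_kj) E_j P, which satisfy the diagonal
   Knill-Laflamme relations M_k^* M_l = delta_kl d_k P: the M_k have mutually
   orthogonal ranges and each M_k / sqrt(d_k) is an isometry on the code.
   The recovery map with Kraus operators M_k^* / sqrt(d_k), completed by the
   projection onto the complement of the ranges of the M_k, is CPTP and maps
   each term E_j (P sigma P) E_j^* to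
   (sum_k |U_kj|^2 d_k) P sigma P = alpha_jj P sigma P.
   It acts on the signed sum term by term, so R(N(P sigma P)) is
   (sum_j sign(j) alpha_jj) P sigma P, and trace preservation of N, i.e.
   sum_j sign(j) E_j^* E_j = 1, makes that scalar act as 1 on P. *)

Section Adjoint.
Variable C : numClosedFieldType.

Lemma adjE p q (A : 'M[C]_(p, q)) i j : adj A i j = (A j i)^*.
Proof. by rewrite !mxE. Qed.

Lemma adj_trmxC p q (A : 'M[C]_(p, q)) : adj A = (A ^t* )%sesqui.
Proof. by rewrite /adj map_trmx. Qed.

Lemma adjK p q (A : 'M[C]_(p, q)) : adj (adj A) = A.
Proof. by apply/matrixP => i j; rewrite !mxE conjCK. Qed.

Lemma adj0 p q : adj (0 : 'M[C]_(p, q)) = 0.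
Proof. by apply/matrixP => i j; rewrite !mxE rmorph0. Qed.

Lemma adj1 p : adj (1%:M : 'M[C]_p) = 1%:M.
Proof. by rewrite /adj map_mx1 trmx1. Qed.

Lemma adjD p q (A B : 'M[C]_(p, q)) : adj (A + B) = adj A + adj B.
Proof. by apply/matrixP => i j; rewrite !mxE rmorphD. Qed.

Lemma adjB p q (A B : 'M[C]_(p, q)) : adj (A - B) = adj A - adj B.
Proof. by apply/matrixP => i j; rewrite !mxE rmorphB. Qed.

Lemma adjZ p q a (A : 'M[C]_(p, q)) : adj (a *: A) = a^* *: adj A.
Proof. by apply/matrixP => i j; rewrite !mxE rmorphM. Qed.

Lemma adj_sum (I : finType) p q (F : I -> 'M[C]_(p, q)) :
  adj (\sum_i F i) = \sum_i adj (F i).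
Proof.
apply/matrixP => i j; rewrite !mxE !summxE rmorph_sum.
by apply: eq_bigr => k _; rewrite !mxE.
Qed.

Lemma adjM p q r (A : 'M[C]_(p, q)) (B : 'M[C]_(q, r)) :
  adj (A *m B) = adj B *m adj A.
Proof. by rewrite /adj map_mxM trmx_mul. Qed.

Lemma adj_mxblock k l (p_ : 'I_k -> nat) (q_ : 'I_l -> nat)
    (B : forall i j, 'M[C]_(p_ i, q_ j)) :
  adj (\mxblock_(i, j) B i j) = \mxblock_(j, i) adj (B i j).
Proof. by apply/matrixP => i j; rewrite !mxE. Qed.

Lemma adj_mxdiag k (p_ : 'I_k -> nat) (B : forall i, 'M[C]_(p_ i)) :
  adj (\mxdiag_i B i) = \mxdiag_i adj (B i).
Proof.
rewrite /mxdiag adj_mxblock; apply: eq_mxblock => i j.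
rewrite eq_sym; case: eqVneq => [->|_]; last exact: adj0.
by rewrite !conform_mx_id.
Qed.

Lemma mxtrace_adjM p q (A : 'M[C]_(p, q)) :
  \tr (adj A *m A) = \sum_i \sum_j `|A j i| ^+ 2.
Proof.
apply: eq_bigr => i _; rewrite mxE; apply: eq_bigr => j _.
by rewrite adjE mulrC normCK.
Qed.

Lemma mxtrace_adjM_ge0 p q (A : 'M[C]_(p, q)) : 0 <= \tr (adj A *m A).
Proof.
by rewrite mxtrace_adjM; do 2![apply: sumr_ge0 => ? _]; rewrite exprn_ge0.
Qed.

Lemma mxtrace_adjM_eq0 p q (A : 'M[C]_(p, q)) :
  \tr (adj A *m A) = 0 -> A = 0.
Proof.
have sq_ge0 (x : C) : 0 <= `|x| ^+ 2 by rewrite exprn_ge0.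
have col_ge0 i : 0 <= \sum_j `|A j i| ^+ 2 by apply: sumr_ge0.
rewrite mxtrace_adjM => /(psumr_eq0P (fun i _ => col_ge0 i)) col0.
apply/matrixP => j i.
have /eqP := @psumr_eq0P _ _ _ (fun j => `|A j i| ^+ 2) (fun j _ => sq_ge0 _)
  (col0 i isT) j isT.
by rewrite mxE expf_eq0 normr_eq0 => /eqP.
Qed.

Lemma gram_scale_gt0 p q r (A : 'M[C]_(p, q)) (B : 'M[C]_(r, q)) (a : C) :
  adj A *m A = a *: (adj B *m B) -> A != 0 -> 0 < a.
Proof.
move=> gramA A_neq0.
have : 0 < \tr (adj A *m A).
  rewrite lt_def mxtrace_adjM_ge0 andbT.
  by apply: contra_neq A_neq0; apply: mxtrace_adjM_eq0.
rewrite gramA mxtraceZ; have := mxtrace_adjM_ge0 B.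
by rewrite le_eqVlt => /predU1P [<-|/pmulr_lgt0 ->]; rewrite ?mulr0 ?ltxx.
Qed.

End Adjoint.

Section PositiveSemidefinite.
Variable C : numClosedFieldType.

Lemma psd_mulmx_adj p q (A : 'M[C]_(q, p)) (Y : 'M[C]_p) :
  psd Y -> psd (A *m Y *m adj A).
Proof.
move=> [hermY posY]; split; first by rewrite /is_hermitian !adjM adjK hermY mulmxA.
by move=> v; have := posY (adj A *m v); rewrite adjM adjK !mulmxA.
Qed.

Lemma psd0 p : psd (0 : 'M[C]_p).
Proof. by split=> [|v]; rewrite ?/is_hermitian ?adj0 // mulmx0 mul0mx mxE. Qed.

Lemma psdD p (Y Z : 'M[C]_p) : psd Y -> psd Z -> psd (Y + Z).
Proof.
move=> [hermY posY] [hermZ posZ].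
split; first by rewrite /is_hermitian adjD hermY hermZ.
by move=> v; rewrite mulmxDr mulmxDl mxE addr_ge0.
Qed.

Lemma psd_sum (I : finType) p (F : I -> 'M[C]_p) :
  (forall i, psd (F i)) -> psd (\sum_i F i).
Proof. by move=> psdF; elim/big_ind: _ => //; [apply: psd0 | apply: psdD]. Qed.

Lemma psdZ p (a : C) (Y : 'M[C]_p) : 0 <= a -> psd Y -> psd (a *: Y).
Proof.
move=> a_ge0 [hermY posY]; split.
  by rewrite /is_hermitian adjZ hermY conj_Creal // ger0_real.
by move=> v; rewrite -scalemxAr -scalemxAl mxE mulr_ge0.
Qed.

End PositiveSemidefinite.

Lemma sum_option (V : nmodType) (T : finType) (F : option T -> V) :
  \sum_o F o = F None + \sum_t F (Some t).
Proof.
by rewrite ![index_enum _]unlock [@Finite.enum in LHS]unlock /= big_cons big_map.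
Qed.

Lemma mxtrace_mul_delta (R : pzSemiRingType) n (A : 'M[R]_n) i j :
  \tr (A *m delta_mx i j) = A j i.
Proof.
rewrite /mxtrace (bigD1 j) //= big1 ?addr0 => [|k /negbTE kj].
  rewrite mxE (bigD1 i) //= big1 ?addr0 => [|l /negbTE li].
    by rewrite mxE !eqxx mulr1.
  by rewrite mxE li mulr0.
by rewrite mxE big1 // => l _; rewrite mxE kj andbF mulr0.
Qed.

Lemma mxtrace_mul_eq1 (R : pzSemiRingType) n (S : 'M[R]_n) :
  (forall X, \tr (S *m X) = \tr X) -> S = 1%:M.
Proof.
move=> trS; apply/matrixP => i j.
by rewrite -mxtrace_mul_delta trS -[delta_mx j i]mul1mx mxtrace_mul_delta.
Qed.

Section KrausMaps.
Variables (C : numClosedFieldType) (n : nat).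

Definition kraus_map (T : finType) (w : T -> C) (A : T -> 'M[C]_n) X : 'M[C]_n :=
  \sum_t w t *: (A t *m X *m adj (A t)).

Lemma mulmx_kraus_map (T : finType) (w : T -> C) (A : T -> 'M[C]_n) B X :
  B *m kraus_map w A X *m adj B = kraus_map w (fun t => B *m A t) X.
Proof.
rewrite mulmx_sumr mulmx_suml; apply: eq_bigr => t _.
by rewrite -scalemxAr -scalemxAl adjM !mulmxA.
Qed.

Lemma kraus_map_mulmx (T : finType) (w : T -> C) (A : T -> 'M[C]_n) B X :
  kraus_map w A (B *m X *m adj B) = kraus_map w (fun t => A t *m B) X.
Proof. by apply: eq_bigr => t _; rewrite adjM !mulmxA. Qed.

Variables (T : finType) (w : T -> C) (A : T -> 'M[C]_n).

Lemma kraus_map_linear : linear (kraus_map w A).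
Proof.
move=> a X Y; rewrite /kraus_map scaler_sumr -big_split /=; apply: eq_bigr => t _.
by rewrite mulmxDr mulmxDl -scalemxAr -scalemxAl scalerDr !scalerA mulrC.
Qed.

Lemma mxblock_mulmx_adj k (B : 'M[C]_n) (X : 'I_k -> 'I_k -> 'M[C]_n) :
  (\mxblock_(i < k, j < k) (B *m X i j *m adj B) : 'M_(\sum_(i < k) n)) =
  \mxdiag_(i < k) B *m \mxblock_(i < k, j < k) X i j *m adj (\mxdiag_(i < k) B).
Proof. by rewrite adj_mxdiag mul_mxdiag_mxblock mul_mxblock_mxdiag. Qed.

Lemma kraus_map_cp :
  (forall t, 0 <= w t) -> completely_positive (kraus_map w A).
Proof.
move=> w_ge0 k X psdX; rewrite mxblock_sum; apply: psd_sum => t.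
have -> : \mxblock_(i, j) (w t *: (A t *m X i j *m adj (A t))) =
          w t *: \mxblock_(i, j) (A t *m X i j *m adj (A t))
          :> 'M_(\sum_(i < k) n).
  by apply/matrixP => i j; rewrite !mxE.
by apply: psdZ => //; rewrite mxblock_mulmx_adj; apply: psd_mulmx_adj.
Qed.

Lemma mxtrace_kraus_map X :
  \tr (kraus_map w A X) = \tr ((\sum_t w t *: (adj (A t) *m A t)) *m X).
Proof.
rewrite raddf_sum mulmx_suml raddf_sum; apply: eq_bigr => t _ /=.
by rewrite -scalemxAl !mxtraceZ mxtrace_mulC mulmxA.
Qed.

Lemma kraus_map_tpP :
  trace_preserving (kraus_map w A) <-> \sum_t w t *: (adj (A t) *m A t) = 1%:M.
Proof.
split=> [tpA|sumA X]; last by rewrite mxtrace_kraus_map sumA mul1mx.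
by apply: mxtrace_mul_eq1 => X; rewrite -mxtrace_kraus_map.
Qed.

Lemma kraus_map_CPTP :
  (forall t, 0 <= w t) -> \sum_t w t *: (adj (A t) *m A t) = 1%:M ->
  CPTP (kraus_map w A).
Proof.
move=> w_ge0 sumA; split; first exact: kraus_map_linear.
by split; [apply: kraus_map_cp | apply/kraus_map_tpP].
Qed.

End KrausMaps.

Section KnillLaflamme.
Variables (C : numClosedFieldType) (n m : nat) (P : 'M[C]_n)
  (E : 'I_m -> 'M[C]_n) (alpha : 'M[C]_m).
Hypotheses (PP : P *m P = P) (adjP : adj P = P) (alpha_herm : adj alpha = alpha)
  (KL : forall i j, P *m adj (E i) *m E j *m P = alpha i j *: P).

Let U := spectralmx alpha.
Let d k := spectral_diag alpha 0 k.

Lemma spectral_mulmx_adj : U *m adj U = 1%:M.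
Proof. by rewrite adj_trmxC; apply/unitarymxP/spectral_unitarymx. Qed.

Lemma spectral_adj_mulmx : adj U *m U = 1%:M.
Proof. exact/mulmx1C/spectral_mulmx_adj. Qed.

Lemma alpha_spectral : alpha = adj U *m diag_mx (spectral_diag alpha) *m U.
Proof.
rewrite adj_trmxC -invmx_unitary ?spectral_unitarymx //; apply/orthomx_spectralP.
by apply/normalmxP; rewrite -adj_trmxC alpha_herm.
Qed.

Lemma spectral_mulmx_alpha : U *m alpha = diag_mx (spectral_diag alpha) *m U.
Proof. by rewrite [X in _ *m X = _]alpha_spectral !mulmxA spectral_mulmx_adj mul1mx. Qed.

Lemma alpha_diag j : alpha j j = \sum_k (U k j)^* * d k * U k j.
Proof.
by rewrite {1}alpha_spectral mxE; apply: eq_bigr => k _; rewrite mul_mx_diag mxE adjE.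
Qed.

Let M k := \sum_j (U k j)^* *: (E j *m P).

Lemma adjM_mulEP k j : adj (M k) *m (E j *m P) = (d k * U k j) *: P.
Proof.
rewrite adj_sum mulmx_suml.
under eq_bigr do rewrite adjZ conjCK adjM adjP -scalemxAl !mulmxA KL scalerA.
rewrite -scaler_suml; congr (_ *: _).
have /matrixP/(_ k j) := spectral_mulmx_alpha.
by rewrite mul_diag_mx !mxE => <-.
Qed.

Lemma adjM_mulM k l : adj (M k) *m M l = ((k == l)%:R * d k) *: P.
Proof.
rewrite mulmx_sumr.
under eq_bigr do rewrite -scalemxAr adjM_mulEP scalerA.
rewrite -scaler_suml; congr (_ *: _).
have /matrixP/(_ k l) := spectral_mulmx_adj; rewrite !mxE => <-.
by rewrite mulr_suml; apply: eq_bigr => j _; rewrite adjE; ring.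
Qed.

Lemma EP_sumM j : E j *m P = \sum_k U k j *: M k.
Proof.
have coef i : \sum_k U k j * (U k i)^* = (adj U *m U) i j.
  by rewrite mxE; apply: eq_bigr => k _; rewrite adjE mulrC.
rewrite /M; under eq_bigr do rewrite scaler_sumr.
rewrite exchange_big /=.
under eq_bigr do (under eq_bigr do rewrite scalerA; rewrite -scaler_suml).
rewrite (bigD1 j) //= [X in _ + X]big1 => [|i ij]; rewrite coef spectral_adj_mulmx mxE.
  by rewrite eqxx scale1r addr0.
by rewrite (negbTE ij) scale0r.
Qed.

Lemma M_eq0_or_d_gt0 k : M k = 0 \/ 0 < d k.
Proof.
have [|Mk_neq0] := eqVneq (M k) 0; [by left | right].
have gramM : adj (M k) *m M k = d k *: (adj P *m P).
  by rewrite adjM_mulM eqxx mul1r adjP PP.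
exact: gram_scale_gt0 gramM Mk_neq0.
Qed.

(* Where d k is not positive, M k = 0 and the value of c k is irrelevant. *)
Let c k := if 0 < d k then (d k)^-1 else 0.

Lemma c_ge0 k : 0 <= c k.
Proof. by rewrite /c; case: ifP => // /ltW; rewrite invr_ge0. Qed.

Lemma c_scaleM k : (c k * d k) *: M k = M k.
Proof.
rewrite /c; case: (M_eq0_or_d_gt0 k) => [->|d_gt0]; first by rewrite scaler0.
by rewrite d_gt0 mulVf ?gt_eqF // scale1r.
Qed.

Lemma c_scaleP k : (c k * d k * (d k)^* ) *: P = d k *: P.
Proof.
case: (M_eq0_or_d_gt0 k) => [Mk0|d_gt0].
  have /esym dP0 := adjM_mulM k k; rewrite Mk0 mulmx0 eqxx mul1r in dP0.
  by rewrite dP0 mulrAC -scalerA dP0 scaler0.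
by rewrite /c d_gt0 mulVf ?gt_eqF // mul1r conj_Creal // gtr0_real.
Qed.

Let G := \sum_k c k *: (M k *m adj (M k)).

Lemma M_mulP k : M k *m P = M k.
Proof. by rewrite mulmx_suml; apply: eq_bigr => j _; rewrite -scalemxAl -mulmxA PP. Qed.

Lemma G_mulM l : G *m M l = M l.
Proof.
rewrite mulmx_suml (bigD1 l) //= [X in _ + X]big1 => [|k kl].
  rewrite -scalemxAl -mulmxA adjM_mulM -scalemxAr M_mulP eqxx mul1r scalerA.
  by rewrite c_scaleM addr0.
by rewrite -scalemxAl -mulmxA adjM_mulM (negbTE kl) mul0r scale0r mulmx0 scaler0.
Qed.

Lemma G_mulEP j : G *m (E j *m P) = E j *m P.
Proof.
by rewrite EP_sumM mulmx_sumr; apply: eq_bigr => k _; rewrite -scalemxAr G_mulM.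
Qed.

Lemma adjG : adj G = G.
Proof.
rewrite adj_sum; apply: eq_bigr => k _.
by rewrite adjZ adjM adjK conj_Creal // ger0_real // c_ge0.
Qed.

Lemma G_idem : G *m G = G.
Proof.
by rewrite {1}/G mulmx_sumr; apply: eq_bigr => k _; rewrite -scalemxAr mulmxA G_mulM.
Qed.

(* [None] indexes the projection onto the complement of the ranges of the M k. *)
Definition recovery_weight (o : option 'I_m) : C :=
  if o is Some k then c k else 1.

Definition recovery_op (o : option 'I_m) : 'M[C]_n :=
  if o is Some k then adj (M k) else 1%:M - G.

Definition recovery := kraus_map recovery_weight recovery_op.

Lemma recovery_CPTP : CPTP recovery.
Proof.
apply: kraus_map_CPTP => [[k|] /=|]; rewrite ?c_ge0 ?ler01 //.
rewrite sum_option /= adjB adj1 adjG mulmxBl mul1mx mulmxBr mulmx1 G_idem.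
rewrite subrr subr0; under eq_bigr do rewrite adjK.
by rewrite scale1r subrK.
Qed.

Lemma recovery_op_mulEP o j :
  recovery_op o *m (E j *m P) = if o is Some k then (d k * U k j) *: P else 0.
Proof.
by case: o => [k|] /=; rewrite ?adjM_mulEP // mulmxBl mul1mx G_mulEP subrr.
Qed.

Lemma recovery_kraus_map (w : 'I_m -> C) sigma :
  recovery (kraus_map w E (P *m sigma *m P)) =
  (\sum_j w j * alpha j j) *: (P *m sigma *m P).
Proof.
have scaleQ a : a *: (P *m sigma *m P) = (a *: P) *m sigma *m P.
  by rewrite !scalemxAl.
rewrite -[X in kraus_map w E (_ *m X)]adjP kraus_map_mulmx /recovery {1}/kraus_map.
under eq_bigr do rewrite mulmx_kraus_map.
have none0 : kraus_map w (fun j => recovery_op None *m (E j *m P)) sigma = 0.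
  by apply: big1 => j _; rewrite recovery_op_mulEP mul0mx adj0 mulmx0 scaler0.
have some k : recovery_weight (Some k) *:
    kraus_map w (fun j => recovery_op (Some k) *m (E j *m P)) sigma =
    \sum_j (w j * ((U k j)^* * d k * U k j)) *: (P *m sigma *m P).
  rewrite scaler_sumr; apply: eq_bigr => j _.
  rewrite recovery_op_mulEP adjZ adjP -scalemxAr -!scalemxAl !scalerA /=.
  transitivity
    ((w j * U k j * (U k j)^* ) *: ((c k * d k * (d k)^* ) *: P) *m sigma *m P).
    by rewrite scalerA -scaleQ rmorphM /=; congr (_ *: _); ring.
  by rewrite c_scaleP scalerA -scaleQ; congr (_ *: _); ring.
rewrite sum_option none0 scaler0 add0r; under eq_bigr do rewrite some.
rewrite exchange_big scaler_suml; apply: eq_bigr => j _.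
by rewrite alpha_diag mulr_sumr scaler_suml.
Qed.

Lemma tp_alpha_diag_sum (w : 'I_m -> C) :
  trace_preserving (kraus_map w E) -> (\sum_j w j * alpha j j) *: P = P.
Proof.
move=> /kraus_map_tpP sumE.
transitivity (P *m (\sum_j w j *: (adj (E j) *m E j)) *m P); last first.
  by rewrite sumE mulmx1 PP.
rewrite mulmx_sumr mulmx_suml scaler_suml; apply: eq_bigr => j _.
by rewrite -scalemxAr -scalemxAl !mulmxA KL scalerA.
Qed.

End KnillLaflamme.

Unset Implicit Arguments.

Theorem theorem6 (R : rcfType) (n m : nat) (P : 'M[R[i]]_n)
  (E : 'I_m -> 'M[R[i]]_n) (J : {set 'I_m}) :
  orth_projector P ->
  J != set0 ->
  semi_positive (signed_opsum E J) ->
  trace_preserving (signed_opsum E J) ->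
  (exists alpha : 'M[R[i]]_m, is_hermitian alpha /\
     forall i j, P *m adj (E i) *m E j *m P = alpha i j *: P) ->
  exists Rec : 'M[R[i]]_n -> 'M[R[i]]_n,
    CPTP Rec /\ forall sigma : 'M[R[i]]_n,
      Rec (signed_opsum E J (P *m sigma *m P)) = P *m sigma *m P.
Proof.
move=> [PP adjP] _ _ tpN [alpha [alpha_herm KL]].
exists (recovery P E alpha); split; first exact: recovery_CPTP.
(* [signed_opsum E J] is convertible to [kraus_map] with weights -1 and 1. *)
move=> sigma; rewrite recovery_kraus_map // !scalemxAl.
by rewrite (tp_alpha_diag_sum PP KL tpN).
Qed.
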